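(* Let $n\geq 3$. For every triangulation $T\in\mathcal{T}_n$ there exists $T'\in\mathcal{T}^{(3)}_n$ such that $T\rhd T'$.
   Context: Label the vertices of a convex $n$-gon by $1,\dots,n$ in cyclic order; $\mathrm{Diag}_n = \{\{i,j\} \subseteq [n]: i-j\not\equiv \pm1 \pmod n\}$; two diagonals cross if they meet in the interior of the polygon (their four endpoints are distinct and interleave cyclically). A triangulation is identified with its set of diagonals, and $\mathcal{T}_n$ is the set of triangulations. Swapping relation: for $\{i,j\},\{i',j'\}\in\mathrm{Diag}_n$ written with $i<j$ and $i'<j'$, write $\{i,j\}\rhd\{i',j'\}$ if either $\{i,j\}$ and $\{i',j'\}$ do not cross (in particular $d\rhd d$ for every $d$), or $i'<i<j'<j<n$ and $j'-i>1$. For $T,T'\in\mathcal{T}_n$, write $T\rhd T'$ if $d\rhd d'$ for all $d\in T$ and $d'\in T'$. A parenthesization of an ordered list of symbols $\sigma_1,\dots,\sigma_m$ is a way to insert parentheses into $\sigma_1\sigma_2\cdots\sigma_m$ so that it is read as $m-1$ applications of a binary product. $k$-parenthesizations are defined recursively: a $0$-parenthesization is a single symbol. For odd $k\geq 1$, a $k$-parenthesization is one of the form $\pi_1(\pi_2(\cdots(\pi_{\ell-1}(\pi_\ell\sigma))\cdots))$ with $\ell \geq 0$, $\sigma$ a single symbol and $\pi_1,\dots,\pi_\ell$ $(k-1)$-parenthesizations (of consecutive blocks of symbols). For even $k \geq 2$, a $k$-parenthesization is one of the form $(\cdots((\sigma\pi_1)\pi_2)\cdots\pi_{\ell-1})\pi_\ell$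 with $\ell\ge 0$, $\sigma$ a single symbol and $\pi_i$ $(k-1)$-parenthesizations. Triangulations $T\in\mathcal{T}_n$ are in bijection with parenthesizations of $\sigma_1,\dots,\sigma_{n-1}$: $T$ corresponds to the unique parenthesization in which, for every triangle $\{i,j,k\}$ of $T$ with $i<j<k$ (triangles may use sides of the polygon), the product $\sigma_i\cdots\sigma_{k-1}$ is formed by multiplying $\sigma_i\cdots\sigma_{j-1}$ and $\sigma_j\cdots\sigma_{k-1}$. $\mathcal{T}^{(k)}_n$ is the set of triangulations corresponding to $k$-parenthesizations under this bijection. *)

From mathcomp Require Import all_boot.
Set Implicit Arguments. Unset Strict Implicit. Unset Printing Implicit Defensive.

(* Vertices of the convex n-gon are 1..n in cyclic order.  A diagonal {i,j}
   is represented by the ordered pair (i,j) with i < j. *)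

Definition is_diag (n i j : nat) : bool :=
  [&& 1 <= i, i.+1 < j, j <= n & ~~ ((i == 1) && (j == n))].

Definition cross (i j i' j' : nat) : bool :=
  [&& i < i', i' < j & j < j'] || [&& i' < i, i < j' & j' < j].

(* sets of diagonals are relations on ordered pairs *)
Definition triangulation (n : nat) (T : rel nat) : Prop :=
  [/\ (forall i j, T i j -> is_diag n i j),
      (forall i j i' j', T i j -> T i' j' -> ~~ cross i j i' j') &
      (forall i j, is_diag n i j -> ~~ T i j ->
         exists i' j', T i' j' /\ cross i j i' j')].

Definition swap_diag (n i j i' j' : nat) : bool :=
  ~~ cross i j i' j' || [&& i' < i, i < j', j' < j, j < n & 1 < j' - i].

Definition swapT (n : nat) (T T' : rel nat) : Prop :=
  forall i j i' j', T i j -> T' i' j' -> swap_diag n i j i' j'.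

(* parenthesizations = binary trees whose leaves are the symbols *)
Inductive ptree : Type := Leaf | Node of ptree & ptree.

Fixpoint nleaves (t : ptree) : nat :=
  match t with Leaf => 1 | Node a b => nleaves a + nleaves b end.

(* t = pi_1 (pi_2 (... (pi_l sigma))) with all pi_i satisfying P *)
Fixpoint rspine (P : ptree -> bool) (t : ptree) : bool :=
  match t with Leaf => true | Node a b => P a && rspine P b end.
(* t = (((sigma pi_1) pi_2) ...) pi_l with all pi_i satisfying P *)
Fixpoint lspine (P : ptree -> bool) (t : ptree) : bool :=
  match t with Leaf => true | Node a b => lspine P a && P b end.

Fixpoint kpar (k : nat) (t : ptree) : bool :=
  match k with
  | 0 => if t is Leaf then true else false
  | k'.+1 => if odd k'.+1 then rspine (kpar k') t else lspine (kpar k') t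
  end.

(* is_node t s i j k : when the leaves of t are sigma_s, sigma_{s+1}, ...,
   t contains the product of sigma_i..sigma_{j-1} and sigma_j..sigma_{k-1}. *)
Fixpoint is_node (t : ptree) (s i j k : nat) : bool :=
  match t with
  | Leaf => false
  | Node a b =>
      [&& i == s, j == s + nleaves a & k == s + nleaves a + nleaves b]
      || is_node a s i j k || is_node b (s + nleaves a) i j k
  end.

Definition edgeT (n : nat) (T : rel nat) (a b : nat) : bool :=
  [|| b == a.+1, (a == 1) && (b == n) | T a b].

Definition triangle (n : nat) (T : rel nat) (i j k : nat) : bool :=
  [&& 1 <= i, i < j, j < k, k <= n, edgeT n T i j, edgeT n T j k & edgeT n T i k].

Definition corresponds (n : nat) (T : rel nat) (t : ptree) : Prop :=
  nleaves t = n.-1 /\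
  forall i j k, triangle n T i j k -> is_node t 1 i j k.

Definition in_Tk (k n : nat) (T : rel nat) : Prop :=
  triangulation n T /\ exists t, kpar k t /\ corresponds n T t.

From mathcomp Require Import all_boot zify.
Set Implicit Arguments. Unset Strict Implicit. Unset Printing Implicit Defensive.

(* A triangulation is the binary tree of its parenthesization: the internal
   nodes are its diagonals and the root is the side {1,n}.  Keep the right
   spine of the root and turn every subtree hanging off it into a
   2-parenthesization by left rotations X (U R) -> (X U) R.  A rotation
   creates a diagonal {i',j'} that can cross an old diagonal {i,j} only in the
   pattern i' < i < j' < j; stopping the rotations before U is a single symbol
   gives j' - i > 1, and the old diagonals ending at n lie on the kept spine,
   so the crossed ones have j < n. *)

(* [node_span t s i j]: numbering the leaves of [t] from [s], some internal
   node of [t] has the leaves [i, ..., j-1]; in the polygon this node is the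
   diagonal (or, at the root, the side) {i,j}. *)
Fixpoint node_span (t : ptree) (s i j : nat) : bool :=
  match t with
  | Leaf => false
  | Node a b => [&& i == s & j == s + nleaves a + nleaves b]
      || node_span a s i j || node_span b (s + nleaves a) i j
  end.

Definition subtree_span (t : ptree) (s i j : nat) : bool :=
  node_span t s i j || [&& j == i.+1, s <= i & i < s + nleaves t].

Lemma nleaves_gt0 t : 0 < nleaves t.
Proof. by elim: t => //= a IHa b _; rewrite addn_gt0 IHa. Qed.

Lemma node_span_bounds t s i j :
  node_span t s i j -> [/\ s <= i, i.+1 < j & j <= s + nleaves t].
Proof.
elim: t s => //= a IHa b IHb s.
have := nleaves_gt0 a; have := nleaves_gt0 b => ? ?.
by case/orP=> [/orP[|/IHa[]]|/IHb[]] => *; split; lia.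
Qed.

Lemma subtree_span_bounds t s i j :
  subtree_span t s i j -> [/\ s <= i, i < j & j <= s + nleaves t].
Proof. by case/orP=> [/node_span_bounds[]|] => *; split; lia. Qed.

Lemma node_span_root t s : 1 < nleaves t -> node_span t s s (s + nleaves t).
Proof. by case: t => //= a b _; rewrite addnA !eqxx. Qed.

Lemma node_spans_cross_free t s i j i' j' :
  node_span t s i j -> node_span t s i' j' -> ~~ cross i j i' j'.
Proof.
elim: t s => //= a IHa b IHb s.
have := nleaves_gt0 a; have := nleaves_gt0 b => ? ?.
case/orP=> [/orP[Rij|Hij]|Hij]; case/orP=> [/orP[Rij'|Hij']|Hij'];
  try exact: IHa Hij Hij'; try exact: IHb Hij Hij'; rewrite /cross;
  repeat match goal with
  | H : is_true (node_span _ _ _ _) |- _ => case/node_span_bounds: H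
  end; lia.
Qed.

Lemma node_span_maximal t s i j :
  s <= i -> i.+1 < j -> j <= s + nleaves t ->
  node_span t s i j \/ exists i' j', node_span t s i' j' /\ cross i j i' j'.
Proof.
elim: t s => [|a IHa b IHb] s /=; first lia.
have := nleaves_gt0 a; have := nleaves_gt0 b.
set m := s + nleaves a => b_gt0 a_gt0 si ij js.
have [jm|mj] := leqP j m.
  case: (IHa s si ij jm) => [->|[i' [j' [Hspan Hcross]]]]; first by left; rewrite orbT.
  by right; exists i', j'; rewrite Hspan orbT.
have [mi|im] := leqP m i.
  have jmb : j <= m + nleaves b by rewrite /m -addnA.
  case: (IHb m mi ij jmb) => [->|[i' [j' [Hspan Hcross]]]]; first by left; rewrite !orbT.
  by right; exists i', j'; rewrite Hspan !orbT.
have [_|not_root] := boolP ((i == s) && (j == m + nleaves b)); first by left.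
have [lt_si|le_is] := ltnP s i.
  right; exists s, m; rewrite node_span_root ?orbT /cross //; lia.
right; exists m, (m + nleaves b); rewrite node_span_root ?orbT /cross //; lia.
Qed.

Lemma subtree_span_NodeP a b s i j : subtree_span (Node a b) s i j ->
  [\/ i = s /\ j = s + nleaves a + nleaves b,
      subtree_span a s i j /\ j <= s + nleaves a
    | subtree_span b (s + nleaves a) i j /\ s + nleaves a <= i].
Proof.
rewrite /subtree_span /= => /orP[/orP[/orP[/andP[/eqP-> /eqP->]|span_a]|span_b]|leaf].
- by constructor 1.
- by constructor 2; rewrite span_a; case/node_span_bounds: span_a.
- by constructor 3; rewrite span_b; case/node_span_bounds: span_b.
have [ja|aj] := leqP j (s + nleaves a).
  by constructor 2; split=> //; apply/orP; right; lia.
by constructor 3; split; [apply/orP; right|]; lia.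
Qed.

Lemma subtree_spans_is_node t s i j k : i < j -> j < k ->
  subtree_span t s i j -> subtree_span t s j k -> subtree_span t s i k ->
  is_node t s i j k.
Proof.
elim: t s => [|a IHa b IHb] s ij jk; first by rewrite /subtree_span /=; lia.
move=> /subtree_span_NodeP[[? ?]|[Hij ?]|[Hij ?]];
  move=> /subtree_span_NodeP[[? ?]|[Hjk ?]|[Hjk ?]];
  move=> /subtree_span_NodeP[[? ?]|[Hik ?]|[Hik ?]] /=;
  try by rewrite IHa ?orbT.
all: try by rewrite IHb ?orbT.
all: repeat match goal with
  | H : is_true (subtree_span _ _ _ _) |- _ => case/subtree_span_bounds: H
  end; have := nleaves_gt0 a; have := nleaves_gt0 b.
all: move=> *; apply/orP; left; apply/orP; left; lia.
Qed.

Section TriangulationTree.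

Variables (n : nat) (T : rel nat).
Hypothesis triT : triangulation n T.

Lemma triangulation_edge_cross_free i j a b :
  T i j -> edgeT n T a b -> ~~ cross i j a b.
Proof.
case: triT => diagT ncT _ Tij; rewrite /edgeT => /or3P[/eqP->|/andP[/eqP-> /eqP->]|Tab].
- by rewrite /cross; lia.
- by have := diagT _ _ Tij; rewrite /is_diag /cross; lia.
- exact: ncT.
Qed.

Lemma triangulation_apex a b : 1 <= a -> a.+1 < b -> b <= n -> edgeT n T a b ->
  exists2 m, a < m < b & edgeT n T a m && edgeT n T m b.
Proof.
move=> a_ge1 ab bn Eab; case: (triT) => diagT _ maxT.
pose P m := (a < m < b) && edgeT n T a m.
have exP : exists m, P m by exists a.+1; rewrite /P /edgeT eqxx; lia.
have ubP m : P m -> m <= b by case/andP; lia.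
case: (ex_maxnP exP ubP) => m /andP[am Eam] maxm.
exists m => //; rewrite Eam /=; apply: contraT => Emb.
have diag_mb : is_diag n m b.
  by move: Emb; rewrite /edgeT /is_diag !negb_or; lia.
have nTmb : ~~ T m b by apply: contra Emb => Tmb; rewrite /edgeT Tmb !orbT.
have [i' [j' [Tij' cr]]] := maxT m b diag_mb nTmb.
have := triangulation_edge_cross_free Tij' Eab.
have := triangulation_edge_cross_free Tij' Eam.
have := diagT _ _ Tij'; rewrite /is_diag.
case: (eqVneq i' a) => [ei|]; last by move: cr; rewrite /cross; lia.
have := maxm j'; rewrite /P /edgeT -ei Tij' !orbT andbT.
by move: cr; rewrite /cross; lia.
Qed.

Lemma edge_tree a b : 1 <= a -> a < b -> b <= n -> edgeT n T a b ->
  exists t, nleaves t = b - a /\ forall i j, node_span t a i j -> edgeT n T i j.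
Proof.
have [d] := ubnP (b - a); elim: d a b => // d IH a b ltd a_ge1 ab bn Eab.
have [b_eq|b_gt] := leqP b a.+1.
  by exists Leaf; split=> //=; lia.
have [m /andP[am mb] /andP[Eam Emb]] := triangulation_apex a_ge1 b_gt bn Eab.
have [lt_ma lt_bm m_ge1 mn] : [/\ m - a < d, b - m < d, 1 <= m & m <= n] by split; lia.
have [ta [size_a span_a]] := IH a m lt_ma a_ge1 am mn Eam.
have [tb [size_b span_b]] := IH m b lt_bm m_ge1 mb bn Emb.
have [am_eq mb_eq] : a + nleaves ta = m /\ m + nleaves tb = b by split; lia.
exists (Node ta tb); split=> [/=|i j]; first lia.
rewrite /= am_eq mb_eq => /orP[/orP[/andP[/eqP-> /eqP->] //|]|].
  exact: span_a.
exact: span_b.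
Qed.

Lemma triangulation_tree : 1 < n ->
  exists t, nleaves t = n.-1 /\ forall i j, T i j -> node_span t 1 i j.
Proof.
move=> n_gt1; have E1n : edgeT n T 1 n by rewrite /edgeT !eqxx orbT.
have [t [size_t span_t]] := edge_tree (leqnn 1) n_gt1 (leqnn n) E1n.
exists t; split=> [|i j Tij]; first lia.
case: triT => diagT _ _; have := diagT _ _ Tij; rewrite /is_diag => /and4P[i_ge1 ij jn _].
have [|//|[i' [j' [span' cr]]]] := node_span_maximal i_ge1 ij (_ : j <= 1 + nleaves t).
  lia.
by have := triangulation_edge_cross_free Tij (span_t _ _ span'); rewrite cr.
Qed.

End TriangulationTree.

(* The product [X Y] re-associated by left rotations X (U R) -> (X U) R down
   the left spine of [Y], stopping before [U] becomes a single symbol. *)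
Fixpoint mul2 (X Y : ptree) : ptree :=
  match Y with
  | Leaf => Node X Leaf
  | Node U R => if U is Leaf then Node X Y else Node (mul2 X U) R
  end.

Fixpoint to_par2 (t : ptree) : ptree :=
  if t is Node a b then mul2 (to_par2 a) (to_par2 b) else Leaf.

Fixpoint to_par3 (t : ptree) : ptree :=
  if t is Node a b then Node (to_par2 a) (to_par3 b) else Leaf.

Lemma nleaves_mul2 X Y : nleaves (mul2 X Y) = nleaves X + nleaves Y.
Proof. by elim: Y => //= -[|U1 U2] IHU R _ //=; rewrite IHU /=; lia. Qed.

Lemma nleaves_to_par2 t : nleaves (to_par2 t) = nleaves t.
Proof. by elim: t => //= a IHa b IHb; rewrite nleaves_mul2 IHa IHb. Qed.

Lemma nleaves_to_par3 t : nleaves (to_par3 t) = nleaves t.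
Proof. by elim: t => //= a _ b ->; rewrite nleaves_to_par2. Qed.

Lemma kpar2_Node a b : kpar 2 (Node a b) = kpar 2 a && kpar 1 b.
Proof. by []. Qed.

Lemma kpar2_mul2 X Y : kpar 2 X -> kpar 2 Y -> kpar 2 (mul2 X Y).
Proof.
move=> X2; elim: Y => [|[|U1 U2] IHU R _] Y2;
  try by rewrite [mul2 _ _]/= kpar2_Node X2.
by move: Y2; rewrite !kpar2_Node => /andP[/IHU-> ->].
Qed.

Lemma kpar2_to_par2 t : kpar 2 (to_par2 t).
Proof. by elim: t => // a IHa b IHb; apply: kpar2_mul2. Qed.

Lemma kpar3_to_par3 t : kpar 3 (to_par3 t).
Proof. by elim: t => // a _ b IHb; apply/andP; split; [apply: kpar2_to_par2|]. Qed.

Lemma mul2_NodeNode X U1 U2 R :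
  mul2 X (Node (Node U1 U2) R) = Node (mul2 X (Node U1 U2)) R.
Proof. by []. Qed.

Lemma node_span_mul2 X Y s i j : node_span (mul2 X Y) s i j ->
  [\/ node_span X s i j, node_span Y (s + nleaves X) i j
    | i = s /\ (j = s + nleaves X + nleaves Y
                \/ node_span Y (s + nleaves X) (s + nleaves X) j)].
Proof.
elim: Y => [|[|U1 U2] IHU R _].
- by case/orP=> [/orP[/andP[/eqP-> /eqP->]|]|] //; [constructor 3 | constructor 1]; auto.
- rewrite /= addnA; case/orP=> [/orP[/andP[/eqP-> /eqP->]|]|];
    [constructor 3 | constructor 1 | constructor 2]; auto.
have U_gt1 : 1 < nleaves (Node U1 U2).
  by have := nleaves_gt0 U1; have := nleaves_gt0 U2; rewrite /=; lia.
move: IHU U_gt1 (nleaves_mul2 X (Node U1 U2)); rewrite mul2_NodeNode.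
move: (Node U1 U2) => U IHU U_gt1 sizeU /=; rewrite sizeU -!addnA.
case/orP=> [/orP[/andP[/eqP-> /eqP->]|/IHU]|span_R].
- by constructor 3; split=> //; left.
- case=> [|span_U|[-> [->|span_U]]];
    [constructor 1 | constructor 2 | constructor 3 | constructor 3] => //.
  + by rewrite span_U orbT.
  + by split=> //; right; rewrite node_span_root ?orbT.
  + by split=> //; right; rewrite span_U orbT.
by constructor 2; rewrite span_R !orbT.
Qed.

Lemma to_par2_cross t s i j i' j' :
  node_span t s i j -> node_span (to_par2 t) s i' j' -> cross i j i' j' ->
  [&& i' < i, i < j', j' < j & 1 < j' - i].
Proof.
elim: t s i j i' j' => // A IHA B IHB s i j i' j' old.
have := nleaves_gt0 A; have := nleaves_gt0 B => B_gt0 A_gt0.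
rewrite [to_par2 _]/= => /node_span_mul2; rewrite !nleaves_to_par2 => new cr.
move: (cr); rewrite /cross => cr'.
have /= [? ? ?] := node_span_bounds old.
move: old new => /= /orP[/orP[/andP[/eqP ei /eqP ej]|/[dup] old /node_span_bounds[? ? ?]]
                        |/[dup] old /node_span_bounds[? ? ?]]
  [/[dup] new /node_span_bounds[]|/[dup] new /node_span_bounds[]
  |[ei' [ej'|/[dup] new /node_span_bounds[]]]];
  rewrite ?nleaves_to_par2 => *; try lia.
- exact: IHA old new cr.
- exact: IHB old new cr.
(* The new diagonal {s,j'} extends the left-spine diagonal {s+|A|,j'} of [B]. *)
have [lt_i|] := ltnP (s + nleaves A) i; last lia.
have /IHB : cross i j (s + nleaves A) j' by rewrite /cross; lia.
by move=> /(_ _ old new); lia.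
Qed.

Lemma to_par3_cross t s i j i' j' :
  node_span t s i j -> node_span (to_par3 t) s i' j' -> cross i j i' j' ->
  [&& i' < i, i < j', j' < j, j < s + nleaves t & 1 < j' - i].
Proof.
elim: t s i j i' j' => // A IHA B IHB s i j i' j' old.
have := nleaves_gt0 A; have := nleaves_gt0 B => B_gt0 A_gt0.
rewrite /= nleaves_to_par2 nleaves_to_par3 => new cr; move: (cr); rewrite /cross => cr'.
have /= [? ? ?] := node_span_bounds old.
move: old new => /= /orP[/orP[/andP[/eqP ei /eqP ej]|/[dup] old /node_span_bounds[? ? ?]]
                        |/[dup] old /node_span_bounds[? ? ?]]
  /orP[/orP[/andP[/eqP ei' /eqP ej']|/[dup] new /node_span_bounds[]]
          |/[dup] new /node_span_bounds[]];
  rewrite ?nleaves_to_par2 ?nleaves_to_par3 => *; try lia.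
- by have := to_par2_cross old new cr; lia.
- by have := IHB _ _ _ _ _ old new cr; lia.
Qed.

(* The root of a tree with [n - 1] leaves spans the side {1,n}. *)
Definition tree_diags (n : nat) (t : ptree) : rel nat :=
  fun i j => node_span t 1 i j && ~~ ((i == 1) && (j == n)).

Section TreeTriangulation.

Variables (n : nat) (t : ptree).
Hypothesis size_t : nleaves t = n.-1.

Lemma tree_diags_triangulation : triangulation n (tree_diags n t).
Proof.
split=> [i j /andP[/node_span_bounds[]]|i j i' j' /andP[span _] /andP[span' _]|i j].
- by rewrite size_t /is_diag => *; lia.
- exact: node_spans_cross_free span span'.
rewrite /is_diag /tree_diags => /and4P[i_ge1 ij jn not_side].
rewrite not_side andbT => not_span.
have [|span|[i' [j' [span' cr]]]] := node_span_maximal i_ge1 ij (_ : j <= 1 + nleaves t).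
- by lia.
- by rewrite span in not_span.
exists i', j'; rewrite span'; split=> //.
apply: contraNN not_side => /andP[/eqP ei /eqP ej].
by move: cr; rewrite /cross ei ej; lia.
Qed.

Lemma tree_diags_edge a b : 1 <= a -> a < b -> b <= n ->
  edgeT n (tree_diags n t) a b -> subtree_span t 1 a b.
Proof.
have := nleaves_gt0 t; rewrite /edgeT /subtree_span => t_gt0 a_ge1 ab bn.
case/or3P=> [/eqP b_eq|/andP[/eqP-> /eqP->]|/andP[-> //]].
  by apply/orP; right; lia.
have [t_le1|t_gt1] := leqP (nleaves t) 1; first by apply/orP; right; lia.
have -> : n = 1 + nleaves t by lia.
by rewrite node_span_root.
Qed.

Lemma tree_diags_corresponds : corresponds n (tree_diags n t) t.
Proof.
split=> // i j k /and4P[i_ge1 ij jk /and4P[kn Eij Ejk Eik]].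
by apply: subtree_spans_is_node; rewrite // tree_diags_edge //; lia.
Qed.

Lemma in_Tk_tree_diags k : kpar k t -> in_Tk k n (tree_diags n t).
Proof.
move=> tk; split; first exact: tree_diags_triangulation.
by exists t; split; last exact: tree_diags_corresponds.
Qed.

End TreeTriangulation.

Lemma swapT_to_par3 n (T : rel nat) t : nleaves t = n.-1 ->
  (forall i j, T i j -> node_span t 1 i j) -> swapT n T (tree_diags n (to_par3 t)).
Proof.
move=> size_t spanT i j i' j' /spanT span /andP[span' _].
rewrite /swap_diag; case cr: (cross i j i' j') => //=.
by have := to_par3_cross span span' cr; rewrite size_t; lia.
Qed.

Theorem lemma3p8 (n : nat) (hn : 3 <= n) (T : rel nat) :
  triangulation n T -> exists T' : rel nat, in_Tk 3 n T' /\ swapT n T T'.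
Proof.
move=> triT; have [t [size_t spanT]] := triangulation_tree triT (ltnW hn).
exists (tree_diags n (to_par3 t)); split; last exact: swapT_to_par3.
by apply: in_Tk_tree_diags; rewrite ?nleaves_to_par3 ?kpar3_to_par3.
Qed.
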